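(* Let $X_\Sigma$ be a projective toric variety and $x\in Z(\Sigma)$. Then the assignment $D\mapsto M^D(x)$, for $D\in\mathrm{Amp}(X_\Sigma)_{\mathbf R}$, is a negative-valued continuous function $\mathrm{Amp}(X_\Sigma)_{\mathbf R}\to\mathbf R$.
   Context: $\Sigma$ complete fan with rays $\Sigma(1)$, generators $u_\rho$, divisors $D_\rho$; a primitive collection is $C\subset\Sigma(1)$ not contained in $\sigma(1)$ for any cone $\sigma$ while every proper subset is; $Z(\Sigma)=\bigcup_CV(x_\rho:\rho\in C)\subset\mathbf C^{\Sigma(1)}$. $\Gamma(G)=\{b\in\mathbf Z^{\Sigma(1)}:\sum b_\rho u_\rho=0\}$, $\langle\chi_D,b\rangle=\sum a_\rho b_\rho$ for $D=\sum a_\rho D_\rho$ extended $\mathbf R$-linearly to $\mathrm{Pic}(X_\Sigma)_{\mathbf R}\times\Gamma(G)_{\mathbf R}$; $\Gamma(G)_{\mathbf R}\subset\mathbf R^{\Sigma(1)}$ with restricted standard norm $\|\cdot\|$. $\mathrm{Amp}(X_\Sigma)_{\mathbf R}$ is the ample cone in $\mathrm{Pic}(X_\Sigma)_{\mathbf R}$ with the Euclidean topology. $\sigma_x=\{v\in\Gamma(G)_{\mathbf R}:v_\rho\ge0\text{ whenever }x_\rho\ne0\}$ and $M^D(x)=\inf_{\lambda\in\sigma_x\setminus\{0\}}\langle\chi_D,\lambda\rangle/\|\lambda\|$. *)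

From HB Require Import structures.
From mathcomp Require Import all_boot all_order all_algebra.
From mathcomp Require Import complex.
From mathcomp Require Import all_classical all_reals ereal.
Set Implicit Arguments. Unset Strict Implicit. Unset Printing Implicit Defensive.
Import Order.TTheory GRing.Theory Num.Theory.
Local Open Scope ring_scope.
Local Open Scope classical_set_scope.

(* Setting: N = Z^n, rays indexed by 'I_r with primitive generators
   u : 'I_r -> 'rV[int]_n.  A cone of the fan is recorded by its set of rays
   S : {set 'I_r}, i.e. sigma = Cone(u_rho : rho in S), sigma(1) = S. *)

Section Toric.
Variables (R : realType) (n r : nat) (u : 'I_r -> 'rV[int]_n).

Definition uR (i : 'I_r) : 'rV[R]_n := map_mx (fun z : int => z%:~R) (u i).

Definition pair (m v : 'rV[R]_n) : R := \sum_(j < n) m 0 j * v 0 j.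

Definition cone_of (S : {set 'I_r}) : set 'rV[R]_n :=
  [set v | exists lam : 'I_r -> R, (forall i, 0 <= lam i) /\
     (forall i, i \notin S -> lam i = 0) /\ v = \sum_(i < r) lam i *: uR i].

Definition is_face (tau sigma : set 'rV[R]_n) : Prop :=
  exists m : 'rV[R]_n, (forall v, sigma v -> 0 <= pair m v) /\
    tau = sigma `&` [set v | pair m v = 0].

Definition primitive_vec (w : 'rV[int]_n) : Prop :=
  w != 0 /\ forall (k : int) (w' : 'rV[int]_n), 0 < k -> w = k *: w' -> k = 1.

Definition is_fan (Sigma : {set {set 'I_r}}) : Prop :=
  injective u /\ (forall i, primitive_vec (u i)) /\
      (forall i, [set i]%SET \in Sigma) /\
      (forall S, S \in Sigma -> forall v, cone_of S v -> cone_of S (- v) -> v = 0) /\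
      (forall S, S \in Sigma -> forall tau, is_face tau (cone_of S) ->
          (exists2 T, T \in Sigma & tau = cone_of T)) /\
      (forall S T, S \in Sigma -> T \in Sigma ->
          is_face (cone_of S `&` cone_of T) (cone_of S)) /\
      (* sigma(1) = S : the rays of cone_of S are exactly the rho in S *)
      (forall S, S \in Sigma -> forall i, cone_of S (uR i) -> i \in S).

Definition is_complete (Sigma : {set {set 'I_r}}) : Prop :=
  forall v : 'rV[R]_n, exists2 S, S \in Sigma & cone_of S v.

Definition is_maxcone (Sigma : {set {set 'I_r}}) (S : {set 'I_r}) : Prop :=
  S \in Sigma /\ forall T, T \in Sigma -> S \subset T -> T = S.

(* D = sum_rho a_rho D_rho (a real torus-invariant divisor) is ample:
   R-Cartier (local data m_sigma on maximal cones) with strictly convex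
   support function. *)
Definition ample (Sigma : {set {set 'I_r}}) (a : 'I_r -> R) : Prop :=
  forall S, is_maxcone Sigma S -> exists m : 'rV[R]_n,
    (forall i, i \in S -> pair m (uR i) = - a i) /\
    (forall i, i \notin S -> pair m (uR i) > - a i).

Definition projective_fan (Sigma : {set {set 'I_r}}) : Prop :=
  [/\ is_fan Sigma, is_complete Sigma & exists a, ample Sigma a].

(* principal divisor div(chi^m) = sum_rho <m,u_rho> D_rho *)
Definition divm (m : 'rV[R]_n) : 'I_r -> R := fun i => pair m (uR i).

Definition primitive_collection (Sigma : {set {set 'I_r}}) (C : {set 'I_r}) : Prop :=
  (forall S, S \in Sigma -> ~~ (C \subset S)) /\
  (forall C' : {set 'I_r}, C' \proper C -> exists2 S, S \in Sigma & C' \subset S).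

Definition in_Z (Sigma : {set {set 'I_r}}) (x : 'I_r -> R[i]) : Prop :=
  exists C, primitive_collection Sigma C /\ forall i, i \in C -> x i = 0.

Definition GammaR : set ('I_r -> R) :=
  [set b | \sum_(i < r) b i *: uR i = 0].

Definition vnorm (b : 'I_r -> R) : R := Num.sqrt (\sum_(i < r) b i ^+ 2).

Definition sigma_x (x : 'I_r -> R[i]) : set ('I_r -> R) :=
  [set v | GammaR v /\ forall i, x i != 0 -> 0 <= v i].

Definition chi_pair (a b : 'I_r -> R) : R := \sum_(i < r) a i * b i.

Definition MD (a : 'I_r -> R) (x : 'I_r -> R[i]) : \bar R :=
  ereal_inf [set (chi_pair a l / vnorm l)%:E | l in sigma_x x `\ (fun _ => 0)].

End Toric.

From mathcomp Require Import all_boot all_order all_algebra.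
From mathcomp Require Import complex.
From mathcomp Require Import all_classical all_reals ereal.
From mathcomp Require Import ring lra.
Set Implicit Arguments. Unset Strict Implicit. Unset Printing Implicit Defensive.
Import Order.TTheory GRing.Theory Num.Theory.
Local Open Scope ring_scope.
Local Open Scope classical_set_scope.

(* By Cauchy-Schwarz every quotient <chi_D, l> / |l| is at least -|D|, so
   M^D(x) is finite as soon as sigma_x has a nonzero element.  Principal
   divisors pair to zero with Gamma(G), so the quotients for D and D' differ by
   at most the norm of D - D' - div(chi^m) for any m: M^D(x) is 1-Lipschitz
   for the quotient norm.  For negativity, let C be a primitive collection on
   which x vanishes, write sum_(rho in C) u_rho = sum_(rho in sigma(1)) lam_rho
   u_rho in a cone sigma, and take lam - 1_C in sigma_x.  Choosing m_sigma' on
   a maximal cone sigma' containing sigma, its pairing with D is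
   -sum_(rho in C) (a_rho + <m_sigma', u_rho>), which is negative by strict
   convexity because C is not contained in sigma'(1). *)

Section NormPairing.
Variables (R : realType) (r : nat).
Implicit Types a b l w : 'I_r -> R.

Lemma vnorm_ge0 b : 0 <= vnorm b.
Proof. exact: sqrtr_ge0. Qed.

Lemma vnorm_sqr b : vnorm b ^+ 2 = \sum_(i < r) b i ^+ 2.
Proof. by rewrite sqr_sqrtr // sumr_ge0 // => i _; rewrite sqr_ge0. Qed.

Lemma vnorm_eq0 b : vnorm b = 0 -> b = (fun _ => 0).
Proof.
move=> b0; have : \sum_(i < r) b i ^+ 2 = 0 by rewrite -vnorm_sqr b0 expr0n.
move/(psumr_eq0P (fun i _ => sqr_ge0 (b i))) => bi0.
by apply: funext => i; apply/eqP; rewrite -sqrf_eq0 bi0.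
Qed.

Lemma vnorm_gt0 l : l <> (fun _ => 0) -> 0 < vnorm l.
Proof. by move=> l0; rewrite lt_def vnorm_ge0 andbT; apply/eqP => /vnorm_eq0. Qed.

Lemma vnormN b : vnorm (fun i => - b i) = vnorm b.
Proof. by rewrite /vnorm; congr Num.sqrt; apply: eq_bigr => i _; rewrite sqrrN. Qed.

Lemma chi_pairNl a l : chi_pair (fun i => - a i) l = - chi_pair a l.
Proof. by rewrite /chi_pair -sumrN; apply: eq_bigr => i _; rewrite mulNr. Qed.

Lemma chi_pairDl a b l :
  chi_pair (fun i => a i + b i) l = chi_pair a l + chi_pair b l.
Proof. by rewrite /chi_pair -big_split; apply: eq_bigr => i _; rewrite mulrDl. Qed.

Lemma chi_pair_le_vnorm w l : chi_pair w l <= vnorm w * vnorm l.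
Proof.
set s := vnorm w; set t := vnorm l.
have [st0 | st_neq0] := eqVneq (s * t) 0.
  move/eqP: st0; rewrite mulf_eq0 => /orP[] /eqP /vnorm_eq0 ->;
  by rewrite /chi_pair big1 ?mulr_ge0 ?vnorm_ge0 // => i _; rewrite ?mul0r ?mulr0.
have st_gt0 : 0 < 2 * (s * t) by rewrite mulr_gt0 // lt_def st_neq0 mulr_ge0 ?vnorm_ge0.
have sum_sqr : \sum_(i < r) (t * w i - s * l i) ^+ 2 =
    2 * (s * t) * (s * t - chi_pair w l).
  have -> : \sum_(i < r) (t * w i - s * l i) ^+ 2 =
      t ^+ 2 * \sum_(i < r) w i ^+ 2 + s ^+ 2 * \sum_(i < r) l i ^+ 2
      - 2 * s * t * chi_pair w l.
    rewrite /chi_pair !mulr_sumr -big_split -sumrB /=.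
    by apply: eq_bigr => i _; ring.
  rewrite -!vnorm_sqr -/s -/t; ring.
have : 0 <= 2 * (s * t) * (s * t - chi_pair w l).
  by rewrite -sum_sqr sumr_ge0 // => i _; rewrite sqr_ge0.
by rewrite pmulr_rge0 // subr_ge0.
Qed.

Lemma Nvnorm_le_chi_pair_ratio a l :
  l <> (fun _ => 0) -> - vnorm a <= chi_pair a l / vnorm l.
Proof.
move=> l0; rewrite ler_pdivlMr ?vnorm_gt0 // mulNr lerNl -chi_pairNl -(vnormN a).
exact: chi_pair_le_vnorm.
Qed.

End NormPairing.

Section PrincipalDivisors.
Variables (R : realType) (n r : nat) (u : 'I_r -> 'rV[int]_n).

Lemma pair_sum (m : 'rV[R]_n) (c : 'I_r -> R) :
  pair m (\sum_(i < r) c i *: uR R u i) = \sum_(i < r) c i * pair m (uR R u i).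
Proof.
rewrite /pair; under eq_bigr => j _ do rewrite summxE mulr_sumr.
rewrite exchange_big /=; apply: eq_bigr => i _; rewrite mulr_sumr.
by apply: eq_bigr => j _; rewrite mxE; ring.
Qed.

Lemma chi_pair_divm_Gamma (m : 'rV[R]_n) (l : 'I_r -> R) :
  GammaR u l -> chi_pair (divm u m) l = 0.
Proof.
move=> Gl; rewrite /chi_pair.
have : pair m (\sum_(i < r) l i *: uR R u i) = 0.
  by rewrite Gl /pair big1 // => j _; rewrite mxE mulr0.
rewrite pair_sum => sum0; rewrite -[RHS]sum0.
by apply: eq_bigr => i _; rewrite mulrC.
Qed.

End PrincipalDivisors.

Section MinimalRatio.
Variables (R : realType) (n r : nat) (u : 'I_r -> 'rV[int]_n) (x : 'I_r -> R[i]).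
Implicit Types a b l w : 'I_r -> R.

Lemma MD_ge_Nvnorm a : ((- vnorm a)%:E <= MD u a x)%E.
Proof.
apply: le_ereal_inf_tmp => _ [l [_ l0] <-].
by rewrite lee_fin Nvnorm_le_chi_pair_ratio.
Qed.

Lemma MD_le_ratio a l : sigma_x u x l -> l <> (fun _ => 0) ->
  (MD u a x <= (chi_pair a l / vnorm l)%:E)%E.
Proof. by move=> xl l0; apply: ereal_inf_lbound; exists l. Qed.

Lemma MD_fin_num_lt0 a l : sigma_x u x l -> l <> (fun _ => 0) -> chi_pair a l < 0 ->
  MD u a x \is a fin_num /\ (MD u a x < 0)%E.
Proof.
move=> xl l0 al_lt0; have le_ratio := MD_le_ratio a xl l0.
have lt0 : (MD u a x < 0)%E.
  by apply: le_lt_trans le_ratio _; rewrite lte_fin pmulr_llt0 ?invr_gt0 ?vnorm_gt0.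
split => //; rewrite fin_numE; apply/andP; split.
  by rewrite gt_eqF // (lt_le_trans (ltNyr _) (MD_ge_Nvnorm a)).
by rewrite lt_eqF // (lt_trans lt0 (ltry _)).
Qed.

Lemma MD_ge_shift a b w :
  (forall l, GammaR u l -> chi_pair a l = chi_pair b l + chi_pair w l) ->
  MD u b x \is a fin_num -> ((fine (MD u b x) - vnorm w)%:E <= MD u a x)%E.
Proof.
move=> chi_a b_fin; apply: le_ereal_inf_tmp => _ [l [[Gl xl] l0] <-].
have b_le : fine (MD u b x) <= chi_pair b l / vnorm l.
  by rewrite -lee_fin fineK // MD_le_ratio.
have := Nvnorm_le_chi_pair_ratio w l0.
by rewrite lee_fin chi_a // mulrDl; lra.
Qed.

Lemma MD_lipschitz a b (m : 'rV[R]_n) :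
  MD u a x \is a fin_num -> MD u b x \is a fin_num ->
  `|fine (MD u a x) - fine (MD u b x)| <= vnorm (fun i => a i - b i - divm u m i).
Proof.
move=> a_fin b_fin; set w := fun i => _.
have chi_a l : GammaR u l -> chi_pair a l = chi_pair b l + chi_pair w l.
  move=> Gl; have := chi_pair_divm_Gamma m Gl.
  have -> : chi_pair w l = chi_pair a l - chi_pair b l - chi_pair (divm u m) l.
    by rewrite /chi_pair -!sumrB; apply: eq_bigr => i _; rewrite /w; ring.
  by move=> ->; ring.
have chi_b l : GammaR u l -> chi_pair b l = chi_pair a l + chi_pair (fun i => - w i) l.
  by move=> Gl; rewrite chi_pairNl chi_a //; ring.
have := MD_ge_shift chi_a b_fin; rewrite -[X in (_ <= X)%E](fineK a_fin) lee_fin.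
have := MD_ge_shift chi_b a_fin; rewrite -[X in (_ <= X)%E](fineK b_fin) lee_fin.
by rewrite vnormN ler_norml => ge_b ge_a; apply/andP; split; lra.
Qed.

End MinimalRatio.

Section Negativity.
Variables (R : realType) (n r : nat) (u : 'I_r -> 'rV[int]_n).
Variable Sigma : {set {set 'I_r}}.

Lemma exists_maxcone_sup S : S \in Sigma ->
  exists2 S', is_maxcone Sigma S' & (S \subset S')%SET.
Proof.
move=> SSigma.
have [T /andP[TSigma ST] Tmax] :=
  @arg_maxnP _ S (fun T => (T \in Sigma) && (S \subset T))%SET (fun T => #|T|)
    (introT andP (conj SSigma (subxx _))).
exists T => //; split => // T' T'Sigma TT'.
have := Tmax T'; rewrite T'Sigma (fintype.subset_trans ST TT') => /(_ isT) card_le.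
by apply/eqP; rewrite eq_sym eqEcard TT'.
Qed.

Lemma sigma_x_neg_witness (x : 'I_r -> R[i]) (a : 'I_r -> R) :
  is_complete R u Sigma -> in_Z Sigma x -> ample u Sigma a ->
  exists l, [/\ sigma_x u x l, l <> (fun _ => 0) & chi_pair a l < 0].
Proof.
move=> complete [C [[C_notin _] xC0]] a_ample.
pose oneC i : R := (i \in C)%:R.
have [S SSigma [lam [lam_ge0 [lam_S sum_lam]]]] :=
  complete (\sum_(i < r) oneC i *: uR R u i).
have [S' S'max SS'] := exists_maxcone_sup SSigma.
have [m [m_in m_out]] := a_ample S' S'max.
have /subsetPn [j jC jS'] := C_notin S' S'max.1.
pose c i := a i + divm u m i.
have c_ge0 i : 0 <= c i.
  rewrite /c /divm; case: (boolP (i \in S')) => iS'; first by rewrite m_in // subrr.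
  by have := m_out i iS'; lra.
have c_lam i : c i * lam i = 0.
  case: (boolP (i \in S')) => iS'; first by rewrite /c /divm m_in // subrr mul0r.
  by rewrite lam_S ?mulr0 //; apply: contra iS'; apply: (fintype.subsetP SS').
pose l i := lam i - oneC i.
have Gl : GammaR u l.
  rewrite /GammaR /= /l; under eq_bigr => i _ do rewrite scalerBl.
  by rewrite sumrB -sum_lam subrr.
have al_lt0 : chi_pair a l < 0.
  have -> : chi_pair a l = - \sum_(i < r) c i * oneC i.
    rewrite -[LHS]addr0 -[X in _ + X](chi_pair_divm_Gamma m Gl) -chi_pairDl -sumrN.
    by rewrite /chi_pair; apply: eq_bigr => i _; rewrite /l mulrBr -/(c i) c_lam sub0r.
  rewrite oppr_lt0 (bigD1 j) //= {1}/oneC jC mulr1 ltr_wpDr //.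
    by rewrite sumr_ge0 // => i _; rewrite mulr_ge0 ?c_ge0 ?ler0n.
  by rewrite /c /divm; have := m_out j jS'; lra.
exists l; split => //.
- split=> // i xi0; have iC : i \notin C by apply: contra xi0 => /xC0 ->.
  by rewrite /l /oneC (negbTE iC) subr0 lam_ge0.
- by move=> l0; move: al_lt0; rewrite l0 /chi_pair big1 ?ltxx // => i _; rewrite mulr0.
Qed.

End Negativity.

Theorem corollary5p8 (R : realType) (n r : nat) (u : 'I_r -> 'rV[int]_n)
    (Sigma : {set {set 'I_r}}) (x : 'I_r -> R[i]) :
  projective_fan R u Sigma -> in_Z Sigma x ->
  (forall a, ample u Sigma a -> MD u a x \is a fin_num /\ (MD u a x < 0)%E) /\
  (forall a, ample u Sigma a -> forall e : R, 0 < e -> exists2 d : R, 0 < d &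
     forall b, ample u Sigma b ->
       (exists m : 'rV[R]_n, vnorm (fun i => a i - b i - divm u m i) < d) ->
       `|fine (MD u a x) - fine (MD u b x)| < e).
Proof.
move=> [_ complete _] xZ.
have MD_neg a : ample u Sigma a -> MD u a x \is a fin_num /\ (MD u a x < 0)%E.
  move=> a_ample.
  have [l [xl l0 al_lt0]] := sigma_x_neg_witness complete xZ a_ample.
  exact: MD_fin_num_lt0 xl l0 al_lt0.
split => // a a_ample e e_gt0; exists e => // b b_ample [m close].
apply: le_lt_trans close.
exact: MD_lipschitz (MD_neg a a_ample).1 (MD_neg b b_ample).1.
Qed.
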